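(* Let $p$ be an odd prime and $K$ a field of characteristic $p$. Let $M$ be either the cyclic group $\mathbb{Z}/p^2\mathbb{Z}$ or the group $M_{p^3}$. Then the smallest integer $n$ such that $M$ embeds (as a group) into $\mathrm{U}_n(K)$ is $n=p+1$.
   Context: $M_{p^3}=\langle x,y\mid x^{p^2}=y^p=1,\ yxy^{-1}=x^{1+p}\rangle$ is the extra-special group of order $p^3$ and exponent $p^2$. $\mathrm{U}_n(K)$ is the group of upper-triangular unipotent $n\times n$ matrices over $K$. *)

From mathcomp Require Import all_boot all_order all_algebra all_fingroup all_solvable.
Set Implicit Arguments. Unset Strict Implicit. Unset Printing Implicit Defensive.
Import GRing.Theory.
Local Open Scope ring_scope.

Definition unitriangular (K : fieldType) (n : nat) (A : 'M[K]_n) : Prop :=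
  (forall i j : 'I_n, (j < i)%N -> A i j = 0) /\ (forall i : 'I_n, A i i = 1).

Definition embeds_in_U (gT : finGroupType) (G : {set gT}) (K : fieldType)
  (n : nat) : Prop :=
  exists f : gT -> 'M[K]_n,
    [/\ {in G, forall x, unitriangular (f x)},
        f 1%g = 1%:M,
        {in G &, forall x y, f (x * y)%g = f x *m f y} &
        {in G &, injective f}].

From mathcomp Require Import all_boot all_order all_algebra all_fingroup all_solvable.
From mathcomp Require Import finfield.
Set Implicit Arguments. Unset Strict Implicit. Unset Printing Implicit Defensive.
Import GRing.Theory.

(* Lower bound: in characteristic p, (1 + N)^p = 1 + N^p for a strictly upper
   triangular N, and N^n = 0 in size n, so U_n(K) has exponent p when n <= p;
   both groups contain an element of order p^2.
   Upper bound: in U_{p+1}(F_p), the unipotent Jordan block J = 1 + N has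
   order p^2 because N^p <> 0 = N^(p+1), and the transvection
   Y = 1 - e_{0,p-1} has order p and satisfies J^Y = J^(p+1).  Hence <J> is
   cyclic of order p^2 and <J, Y> is a quotient of the presentation of
   M_{p^3} of order p^3, i.e. isomorphic to it.  Finally F_p embeds in K. *)

Section Unitriangular.
Local Open Scope ring_scope.
Variables (F : fieldType) (n : nat).
Implicit Types A B N : 'M[F]_n.

Definition unitriangularb A := is_trig_mx A^T && [forall i, A i i == 1].

Lemma unitriangularP A : reflect (unitriangular A) (unitriangularb A).
Proof.
apply: (iffP andP) => [[/is_trig_mxP A0 /forallP A1]|[A0 A1]]; split.
- by move=> i j ji; have := A0 j i ji; rewrite mxE.
- by move=> i; apply/eqP.
- by apply/is_trig_mxP=> i j ij; rewrite mxE A0.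
- by apply/forallP=> i; rewrite A1.
Qed.

Lemma unitriangular1 : unitriangular (1%:M : 'M[F]_n).
Proof. by split=> [i j ji|i]; rewrite mxE ?eqxx // eq_sym -val_eqE /= ltn_eqF. Qed.

Lemma unitriangularM A B :
  unitriangular A -> unitriangular B -> unitriangular (A *m B).
Proof.
move=> [A0 A1] [B0 B1]; split=> [i j ji|i]; rewrite mxE.
  rewrite big1 // => k _; case: (ltnP k i) => [ki|ik]; first by rewrite A0 ?mul0r.
  by rewrite B0 ?mulr0 // (leq_trans ji ik).
rewrite (bigD1 i) //= A1 B1 mul1r big1 ?addr0 // => k ki.
case: (ltngtP k i) => [lt_ki|lt_ik|/val_inj eq_ki]; first by rewrite A0 ?mul0r.
  by rewrite B0 ?mulr0.
by rewrite eq_ki eqxx in ki.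
Qed.

Lemma unitriangular_unitmx A : unitriangular A -> A \in unitmx.
Proof.
move=> /unitriangularP/andP[trig_tA /forallP A1].
by rewrite unitmxE -det_tr det_trig // big1 ?unitr1 // => i _; rewrite mxE; apply/eqP.
Qed.

Lemma strictly_upper_exp_entry N :
    (forall i j : 'I_n, (j <= i)%N -> N i j = 0) ->
  forall k (i j : 'I_n), (j < i + k)%N -> (N ^+ k) i j = 0.
Proof.
move=> N0; elim=> [|k IHk] i j.
  by rewrite addn0 expr0 mxE => /ltn_eqF; rewrite eq_sym -val_eqE /= => ->.
move=> jik; rewrite exprSr mxE big1 // => l _.
case: (ltnP l (i + k)) => [lik|ikl]; first by rewrite IHk ?mul0r.
by rewrite N0 ?mulr0 // -ltnS (leq_trans jik) // addnS.
Qed.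

Lemma strictly_upper_nilpotent N :
  (forall i j : 'I_n, (j <= i)%N -> N i j = 0) -> N ^+ n = 0.
Proof.
move=> N0; apply/matrixP=> i j; rewrite mxE (strictly_upper_exp_entry N0) //.
exact: leq_trans (ltn_ord j) (leq_addl i n).
Qed.

End Unitriangular.

Section PrimeCharacteristic.
Local Open Scope ring_scope.
Variables (F : fieldType) (p : nat).
Hypothesis pF : p \in [pchar F].

Lemma exprD1_pchar n (A : 'M[F]_n.+1) : (1 + A) ^+ p = 1 + A ^+ p.
Proof.
have pM : p \in [pchar 'M[F]_n.+1] by rewrite pchar_lalg.
rewrite -!(pFrobenius_autE pM) pFrobenius_autD_comm; last exact/commr_sym/commr1.
by rewrite pFrobenius_aut1.
Qed.

Lemma unitriangular_exp_pchar n (A : 'M[F]_n) :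
  (n <= p)%N -> unitriangular A -> A ^+ p = 1.
Proof.
case: n A => [A _ _|n A le_np [A0 A1]]; first by apply/matrixP=> -[].
rewrite -[A](addrNK 1) addrC exprD1_pchar -(subnK le_np) exprD.
rewrite strictly_upper_nilpotent ?mulr0 ?addr0 // => i j; rewrite leq_eqVlt.
case/orP=> [/eqP/val_inj ->|lt_ji]; first by rewrite !mxE eqxx A1 subrr.
by rewrite !mxE A0 // eq_sym -val_eqE /= ltn_eqF // subr0.
Qed.

End PrimeCharacteristic.

Section Embeddings.
Variables (gT : finGroupType) (G : {group gT}).

Lemma embeds_in_U_expg_pchar (K : fieldType) n p :
    p \in [pchar K]%R -> (n <= p)%N -> embeds_in_U G K n ->
  {in G, forall x, x ^+ p = 1}%g.
Proof.
move=> pK le_np [f [fU f1 fM finj]] x Gx.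
have fX k : f (x ^+ k)%g = (f x ^+ k)%R.
  elim: k => [|k IHk]; first by rewrite expg0 f1.
  by rewrite expgS fM ?groupX // IHk exprS.
apply: finj; rewrite ?groupX // fX f1.
by rewrite (unitriangular_exp_pchar pK le_np (fU x Gx)).
Qed.

Lemma embeds_in_U_gt_pchar (K : fieldType) n p x :
    p \in [pchar K]%R -> x \in G -> #[x]%g = (p ^ 2)%N -> embeds_in_U G K n ->
  (p < n)%N.
Proof.
move=> pK Gx ox embG; rewrite ltnNge; apply/negP=> le_np.
have /eqP := embeds_in_U_expg_pchar pK le_np embG Gx.
rewrite -order_dvdn ox -[X in (_ %| X)%N]expn1 dvdn_Pexp2l //.
exact/prime_gt1/(pcharf_prime pK).
Qed.

End Embeddings.

Lemma embeds_in_U_map (gT : finGroupType) (G : {group gT}) (F K : fieldType)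
    (f : {rmorphism F -> K}) n :
  embeds_in_U G F n -> embeds_in_U G K n.
Proof.
case=> rho [rhoU rho1 rhoM rho_inj]; exists (fun x => map_mx f (rho x)); split.
- move=> x /rhoU[A0 A1]; split=> [i j ji|i]; rewrite mxE.
    by rewrite A0 ?rmorph0.
  by rewrite A1 rmorph1.
- by move/(congr1 (map_mx f)): rho1; rewrite map_mx1.
- by move=> x y Gx Gy; rewrite rhoM ?map_mxM.
- by move=> x y Gx Gy /map_mx_inj; apply: rho_inj.
Qed.

Lemma embeds_in_U_pchar (gT : finGroupType) (G : {group gT}) (K : fieldType) p n :
  p \in [pchar K]%R -> embeds_in_U G 'F_p n -> embeds_in_U G K n.
Proof.
(* [pPrimeCharType pK] is K as an 'F_p-algebra; its unit map embeds 'F_p. *)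
by move=> pK /(@embeds_in_U_map _ _ _ (pPrimeCharType pK) (in_alg _) n).
Qed.

Section UnitriangularGroup.
Variables (F : finFieldType) (n : nat).

Definition unitriangular_units : {set {'GL_n.+1[F]}} :=
  [set u | unitriangularb (val u)].

Lemma unitriangular_units_group_set : group_set unitriangular_units.
Proof.
apply/group_setP; split; first by rewrite inE; apply/unitriangularP/unitriangular1.
move=> u v; rewrite !inE => /unitriangularP uU /unitriangularP vU.
by apply/unitriangularP; rewrite FinRing.val_unitM; apply: unitriangularM.
Qed.

Canonical unitriangular_units_group := Group unitriangular_units_group_set.

Definition unitriangular_unit (A : 'M[F]_n.+1) (AU : unitriangular A) :
  {'GL_n.+1[F]} := FinRing.Unit (unitriangular_unitmx AU).

Lemma unitriangular_unit_in (A : 'M[F]_n.+1) (AU : unitriangular A) :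
  unitriangular_unit AU \in unitriangular_units.
Proof. by rewrite inE; apply/unitriangularP. Qed.

Lemma embeds_in_U_isog (gT : finGroupType) (G : {group gT})
    (H : {group {'GL_n.+1[F]}}) :
  (G \isog H)%g -> H \subset unitriangular_units -> embeds_in_U G F n.+1.
Proof.
case/isogP=> f injf imf sHU; exists (fun x => val (f x)); split.
- move=> x Gx; have: f x \in unitriangular_units.
    by apply: (subsetP sHU); rewrite -imf mem_morphim.
  by rewrite inE => /unitriangularP.
- by rewrite morph1.
- by move=> x y Gx Gy; rewrite morphM // FinRing.val_unitM.
- by move=> x y Gx Gy /val_inj; apply: (injmP injf).
Qed.

End UnitriangularGroup.

Section ModularGroup.
Local Open Scope group_scope.

Lemma modular_group_isog_generators (gT : finGroupType) (p : nat) (x y : gT) :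
    prime p -> #[x] = (p ^ 2)%N -> y ^+ p = 1 -> x ^ y = x ^+ p.+1 ->
  <[x]> <*> <[y]> \isog 'Mod_(p ^ 3).
Proof.
move=> p_pr ox yp xy; set H := (<[x]> <*> <[y]>)%G.
have p_gt1 := prime_gt1 p_pr.
have xp_neq1 : x ^+ p != 1.
  by rewrite -order_dvdn ox -[X in (_ %| X)%N]expn1 dvdn_Pexp2l.
have y_notin_x : y \notin <[x]>.
  apply: contra xp_neq1 => /cycleP[k def_y]; apply/eqP/(mulgI x).
  by rewrite mulg1 -expgS -xy def_y conjgE -expgS expgSr mulKg.
have homH :
    H \homg Grp (x : y : x ^+ (p ^ 3.-1), y ^+ p, x ^ y = x ^+ (p ^ 3.-2).+1).
  apply/existsP; exists (x, y); rewrite /= !xpair_eqE.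
  by rewrite -ox expg_order yp expn1 xy !eqxx.
have GrpMod := Grp_modular_group p_pr (isT : (2 < 3)%N).
have oH : #|H| = (p ^ 3)%N.
  have /dvdn_pfactor[//|m le_m3 oH] : (#|H| %| p ^ 3)%N.
    by rewrite -(card_modular_group p_pr (isT : (2 < 3)%N)) card_homg // GrpMod.
  have /proper_card : <[x]> \proper H.
    apply/properP; split; first exact: joing_subl.
    by exists y; rewrite ?(subsetP (joing_subr _ _)) ?cycle_id.
  rewrite -orderE ox oH ltn_exp2l // => lt2m.
  by congr (_ ^ _)%N; apply/eqP; rewrite eqn_leq le_m3.
by apply/(isoGrpP _ GrpMod); rewrite card_modular_group.
Qed.

End ModularGroup.

Section ShiftMatrix.
Local Open Scope ring_scope.
Variables (R : nzRingType) (n : nat).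

Definition shift_mx : 'M[R]_n := \matrix_(i, j) (i.+1 == j)%:R.

Lemma shift_mx_expE k (i j : 'I_n) : (shift_mx ^+ k) i j = ((i + k)%N == j)%:R.
Proof.
elim: k j => [|k IHk] j; first by rewrite expr0 addn0 mxE.
rewrite exprSr mxE; under eq_bigr do rewrite IHk mxE.
case: (ltnP (i + k) n) => [lt_ikn|le_nik].
  rewrite (bigD1 (Ordinal lt_ikn)) //= eqxx mul1r addnS big1 ?addr0 // => l.
  move=> ne_l; case: eqP => [def_l|_]; last by rewrite mul0r.
  by case/eqP: ne_l; apply: val_inj.
rewrite big1 => [|l _]; last first.
  by rewrite gtn_eqF ?mul0r // (leq_trans (ltn_ord l) le_nik).
by rewrite addnS gtn_eqF // ltnS (leq_trans (ltnW (ltn_ord j)) le_nik).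
Qed.

Lemma mul_delta_mx_entry (a b : 'I_n) (A : 'M[R]_n) i j :
  (delta_mx a b *m A) i j = (i == a)%:R * A b j.
Proof.
rewrite mxE (bigD1 b) //= mxE eqxx andbT big1 ?addr0 // => k /negbTE kb.
by rewrite mxE kb andbF mul0r.
Qed.

Lemma mul_mx_delta_entry (a b : 'I_n) (A : 'M[R]_n) i j :
  (A *m delta_mx a b) i j = A i a * (j == b)%:R.
Proof.
rewrite mxE (bigD1 a) //= mxE eqxx /= big1 ?addr0 // => k /negbTE ka.
by rewrite mxE ka mulr0.
Qed.

End ShiftMatrix.

Section JordanTransvection.
Local Open Scope ring_scope.
Variables (F : fieldType) (p : nat).
Hypothesis pF : p \in [pchar F].
Let p_gt1 : (1 < p)%N. Proof. exact/prime_gt1/(pcharf_prime pF). Qed.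

Local Notation N := (shift_mx F p.+1).
Let q : 'I_p.+1 := inord p.-1.
Let qE : q = p.-1 :> nat. Proof. by rewrite inordK // ltnS leq_pred. Qed.
Let qS : q.+1 = p. Proof. by rewrite qE prednK // ltnW. Qed.
Let q_neq0 : q != 0. Proof. by rewrite -val_eqE /= qE -subn1 subn_eq0 -ltnNge. Qed.
Local Notation E := (delta_mx 0 q : 'M[F]_p.+1).

Definition jordan_mx : 'M[F]_p.+1 := 1 + N.
Definition transvection_mx : 'M[F]_p.+1 := 1 - E.

Lemma shift_mx_exp_eq0 k : (p < k)%N -> N ^+ k = 0.
Proof.
move=> lt_pk; rewrite -(subnK lt_pk) exprD strictly_upper_nilpotent ?mulr0 //.
by move=> i j le_ji; rewrite mxE gtn_eqF // ltnS.
Qed.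

Lemma jordan_mx_unitriangular : unitriangular jordan_mx.
Proof.
split=> [i j lt_ji|i]; rewrite !mxE.
  have [eq_ij|_] := eqVneq i j; first by rewrite eq_ij ltnn in lt_ji.
  by rewrite (gtn_eqF (ltnW lt_ji : (j < i.+1)%N)) mulr0n addr0.
by rewrite eqxx (gtn_eqF (ltnSn i)) addr0.
Qed.

Lemma transvection_mx_unitriangular : unitriangular transvection_mx.
Proof.
split=> [i j lt_ji|i]; rewrite !mxE.
  have [eq_ij|_] := eqVneq i j; first by rewrite eq_ij ltnn in lt_ji.
  have [eq_i0|_] := eqVneq i 0; first by rewrite eq_i0 ltn0 in lt_ji.
  by rewrite subrr.
have [->|_] := eqVneq i 0; last by rewrite eqxx subr0.
by rewrite eqxx eq_sym (negbTE q_neq0) subr0.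
Qed.

Lemma jordan_mx_expp : jordan_mx ^+ p = 1 + N ^+ p.
Proof. exact: (exprD1_pchar pF). Qed.

Lemma jordan_mx_expp2 : jordan_mx ^+ (p * p) = 1.
Proof.
rewrite exprM jordan_mx_expp (exprD1_pchar pF) -exprM shift_mx_exp_eq0 ?addr0 //.
by rewrite -{1}(muln1 p) ltn_mul2l ltnW.
Qed.

Lemma jordan_mx_expp_neq1 : jordan_mx ^+ p != 1.
Proof.
rewrite jordan_mx_expp; apply/eqP=> /matrixP/(_ 0 ord_max).
rewrite !mxE shift_mx_expE /= eqxx mulr1n -[RHS]addr0 => /addrI/eqP.
by rewrite oner_eq0.
Qed.

Lemma transvection_mx_expp : transvection_mx ^+ p = 1.
Proof.
have E2 : E * E = 0.
  by apply/matrixP=> i j; rewrite mul_delta_mx_entry !mxE (negbTE q_neq0) mulr0.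
rewrite /transvection_mx (exprD1_pchar pF) -[in X in _ ^+ X](subnK p_gt1).
by rewrite exprD expr2 mulrNN E2 mulr0 addr0.
Qed.

Lemma jordan_mx_conj :
  jordan_mx * transvection_mx = transvection_mx * jordan_mx ^+ p.+1.
Proof.
have NE : N * E = 0.
  by apply/matrixP=> i j; rewrite mul_mx_delta_entry !mxE mul0r.
have EN : E * N = N ^+ p.
  apply/matrixP=> i j; rewrite mul_delta_mx_entry shift_mx_expE !mxE qS.
  have [->|i_neq0] := eqVneq i 0; first by rewrite /= mulr1n mul1r add0n.
  rewrite /= mulr0n mul0r; case: eqP => // def_j.
  case/negP: i_neq0; move: (ltn_ord j).
  by rewrite -def_j ltnS -[X in (_ <= X)%N]add0n leq_add2r leqn0.
have ENp : E * N ^+ p = 0.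
  apply/matrixP=> i j; rewrite mul_delta_mx_entry shift_mx_expE !mxE.
  rewrite gtn_eqF /= ?mulr0n ?mulr0 //.
  have q_gt0 : (0 < q)%N by rewrite lt0n.
  exact: leq_trans (ltn_ord j) (leq_add q_gt0 (leqnn p)).
have Jp1 : jordan_mx ^+ p.+1 = 1 + N + N ^+ p.
  rewrite exprSr jordan_mx_expp /jordan_mx mulrDl mul1r mulrDr mulr1 -exprSr.
  by rewrite (shift_mx_exp_eq0 (ltnSn p)) addr0 addrAC.
rewrite Jp1 /jordan_mx /transvection_mx mulrBr mulr1 mulrDl mul1r NE addr0.
rewrite mulrBl mul1r !mulrDr mulr1 EN ENp addr0.
by rewrite opprD addrA addrAC addrK.
Qed.

End JordanTransvection.

Section UnitriangularModel.
Variables (F : finFieldType) (p : nat).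
Hypothesis pF : p \in [pchar F]%R.
Local Open Scope group_scope.

Let J := unitriangular_unit (jordan_mx_unitriangular F p).
Let Y := unitriangular_unit (transvection_mx_unitriangular pF).

Lemma order_jordan_unit : #[J] = (p ^ 2)%N.
Proof.
have : (#[J] %| p ^ 2)%N.
  rewrite order_dvdn -mulnn; apply/eqP/val_inj.
  by rewrite FinRing.val_unitX /= jordan_mx_expp2.
case/dvdn_pfactor=> [|m]; first exact: pcharf_prime pF.
rewrite leq_eqVlt => /orP[/eqP -> //|]; rewrite ltnS => le_m1 oJ.
case/negP: (jordan_mx_expp_neq1 pF); apply/eqP.
have /eqP/(congr1 val) : J ^+ p == 1.
  by rewrite -order_dvdn oJ -{2}(expn1 p) dvdn_exp2l.
by rewrite FinRing.val_unitX.
Qed.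

Lemma embeds_in_U_cyclic_pchar (gT : finGroupType) (G : {group gT}) :
  cyclic G -> #|G| = (p ^ 2)%N -> embeds_in_U G F p.+1.
Proof.
move=> cycG oG; apply: (embeds_in_U_isog (H := <[J]>%G)).
  by rewrite isog_cyclic_card ?cycle_cyclic //= -orderE order_jordan_unit oG.
by rewrite /= cycle_subG unitriangular_unit_in.
Qed.

Lemma embeds_in_U_modular_pchar (gT : finGroupType) (G : {group gT}) :
  G \isog 'Mod_(p ^ 3) -> embeds_in_U G F p.+1.
Proof.
have Yp : Y ^+ p = 1.
  by apply: val_inj; rewrite FinRing.val_unitX /= transvection_mx_expp.
have JY : J ^ Y = J ^+ p.+1.
  suff JY : J * Y = Y * J ^+ p.+1 by rewrite conjgE JY mulKg.
  by apply: val_inj; rewrite !FinRing.val_unitM FinRing.val_unitX /= jordan_mx_conj.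
move=> isoG; apply: (embeds_in_U_isog (H := (<[J]> <*> <[Y]>)%G)).
  apply: isog_trans isoG _; rewrite isog_sym.
  exact: modular_group_isog_generators (pcharf_prime pF) order_jordan_unit Yp JY.
by rewrite /= join_subG !cycle_subG !unitriangular_unit_in.
Qed.

End UnitriangularModel.

Theorem corollary3p8 (p : nat) (K : fieldType) (gT : finGroupType)
  (M : {group gT}) :
  prime p -> odd p -> p \in [pchar K]%R ->
  ((cyclic M /\ #|M| = (p ^ 2)%N) \/ (M \isog 'Mod_(p ^ 3))%g) ->
  embeds_in_U M K p.+1 /\ (forall n : nat, embeds_in_U M K n -> (p.+1 <= n)%N).
Proof.
move=> p_pr _ pK caseM; have pFp := pchar_Fp p_pr.
have [x Mx ox] : exists2 x, x \in M & #[x]%g = (p ^ 2)%N.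
  case: caseM => [[/cyclicP[x defM] oM]|isoM].
    by exists x; rewrite ?defM ?cycle_id // orderE -defM.
  have [[x y] [_ Mx ox _] _] := generators_modular_group p_pr (isT : (2 < 3)%N) isoM.
  by exists x.
split=> [|n]; last exact: embeds_in_U_gt_pchar pK Mx ox.
(* Plain [exact]: the two fieldType instances on 'F_p agree only up to
   conversion. *)
apply: (embeds_in_U_pchar pK); case: caseM => [[cycM oM]|isoM].
  exact (embeds_in_U_cyclic_pchar pFp cycM oM).
exact (embeds_in_U_modular_pchar pFp isoM).
Qed.
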